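(* Let $\mu \in C^1(\mathbb{R})$ and a periodic $\phi\in C^2(\mathbb{R})$ satisfy $\phi''(x) = 1 - \int_{\mathbb{R}} \mu(\tfrac12 v^2 + \phi(x))\,dv$ together with assumptions (i)–(iv) below. Then $q(x) = \int_{\mathbb{R}} \mu'(\tfrac12 v^2 + \phi(x))\,dv > 0$ for some $x \in [0,P_\phi]$ (indeed for some $x\in[0,P_\phi/2]$). In particular, it is impossible that $\mu'(e) \le 0$ for all $e \in [\phi_-,\infty)$.
   Context: Assumptions: (i) $\mu\in C^1(\mathbb{R})$ is nonnegative; (ii) $\int_{\mathbb{R}} \mu(\tfrac12 v^2)\,dv = 1$; (iii) there are $\gamma>1$, $C>0$ with $|\mu'(y)| \le C/(1+|y|^\gamma)$ for all $y$; (iv) $\phi$ is nonconstant with minimal period $P_\phi$, and, writing $\phi_+ = \max\phi$, $\phi_- = \min\phi$, it is normalized so that $\phi(0)=\phi(P_\phi)=\phi_+$, $\phi(P_\phi/2) = \phi_-$, $\phi(x) = \phi(P_\phi - x)$ for all $x\in[0,P_\phi]$, and $\phi$ is strictly decreasing on $[0,P_\phi/2]$. *)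

From Stdlib Require Import Reals.
Open Scope R_scope.

(* |y|^g for real exponent g > 0, with the convention 0^g = 0
   (Stdlib's Rpower 0 g is exp (g * ln 0) = 1, so we special-case 0). *)
Definition abs_rpow (y g : R) : R :=
  match Req_EM_T y 0 with
  | left _ => 0
  | right _ => Rpower (Rabs y) g
  end.

Definition improper_integral (f : R -> R) (l : R) : Prop :=
  (forall a b : R, inhabited (Riemann_integrable f a b)) /\
  (forall eps : R, eps > 0 ->
     exists M : R, forall (a b : R) (pr : Riemann_integrable f a b),
       a <= - M -> M <= b -> Rabs (RiemannInt pr - l) < eps).

From Stdlib Require Import Reals Lra Lia Psatz Classical.
From Coquelicot Require Import Coquelicot.
Open Scope R_scope.

(* Write F(p) for the integral of mu (v^2/2 + p) over v, so that phi'' = 1 - F(phi) and,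
   formally, F' = q.  The decay of mu' bounds the integrands by K / v^2 uniformly in
   p >= phi_-, so the truncated integrals over [-R, R] converge at rate K / R; the mean
   value theorem applied to them shows that F is nonincreasing on any interval where q
   is nonpositive.  If q <= 0 at every phi(x), x in [0, P/2], then, phi being decreasing
   there, phi'' = 1 - F(phi) is nonincreasing on [0, P/2].  But phi' vanishes at the
   maximum 0 and at the minimum P/2 and is negative somewhere in between, so phi'' is
   negative before and positive after that point: a contradiction.  The second claim
   follows since mu' <= 0 on [phi_-, oo) forces q <= 0. *)

Definition is_improper_RInt (f : R -> R) (l : R) : Prop :=
  (forall a b, ex_RInt f a b) /\
  (forall eps, 0 < eps -> exists M, forall a b,
     a <= - M -> M <= b -> Rabs (RInt f a b - l) < eps).

Lemma improper_integralE f l : improper_integral f l <-> is_improper_RInt f l.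
Proof.
  split; intros [Hint Hlim]; split.
  - intros a b; destruct (Hint a b) as [pr]; exact (ex_RInt_Reals_1 f a b pr).
  - intros eps Heps; destruct (Hlim eps Heps) as [M HM]; exists M; intros a b Ha Hb.
    destruct (Hint a b) as [pr]; rewrite (RInt_Reals f a b pr); auto.
  - intros a b; constructor; exact (ex_RInt_Reals_0 f a b (Hint a b)).
  - intros eps Heps; destruct (Hlim eps Heps) as [M HM]; exists M; intros a b pr Ha Hb.
    rewrite <- (RInt_Reals f a b pr); auto.
Qed.

Lemma is_improper_RInt_nonpos f l :
  (forall v, f v <= 0) -> is_improper_RInt f l -> l <= 0.
Proof.
  intros Hf [Hint Hlim].
  apply Rle_plus_epsilon; intros eps Heps.
  destruct (Hlim eps Heps) as [M HM].
  pose proof (Rle_abs M); pose proof (Rabs_pos M).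
  specialize (HM (- Rabs M) (Rabs M) ltac:(lra) ltac:(lra)).
  assert (Hneg : RInt f (- Rabs M) (Rabs M) <= RInt (fun _ => 0) (- Rabs M) (Rabs M)).
  { apply RInt_le; [lra | auto | apply ex_RInt_const | intros; apply Hf]. }
  rewrite RInt_const in Hneg; unfold scal, mult in Hneg; simpl in Hneg.
  rewrite Rmult_0_r in Hneg.
  apply Rabs_lt_between' in HM; lra.
Qed.

Lemma is_improper_RInt_le_sym f g lf lg c R0 :
  is_improper_RInt f lf -> is_improper_RInt g lg ->
  (forall R, R0 <= R -> RInt f (- R) R <= RInt g (- R) R + c / R) -> lf <= lg.
Proof.
  intros [_ Hf] [_ Hg] Hfg.
  apply Rle_plus_epsilon; intros eps Heps.
  destruct (Hf (eps / 3)) as [Mf HMf]; [lra|].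
  destruct (Hg (eps / 3)) as [Mg HMg]; [lra|].
  set (R := Rabs R0 + Rabs Mf + Rabs Mg + 3 * Rabs c / eps + 1).
  assert (Hc : 0 <= 3 * Rabs c / eps).
  { apply Rdiv_le_0_compat; [pose proof (Rabs_pos c)|]; lra. }
  pose proof (Rle_abs R0); pose proof (Rle_abs Mf); pose proof (Rle_abs Mg).
  pose proof (Rabs_pos R0); pose proof (Rabs_pos Mf); pose proof (Rabs_pos Mg).
  assert (HcR : c / R <= eps / 3).
  { apply Rle_div_l; [unfold R; lra|].
    assert (3 * Rabs c / eps * eps = 3 * Rabs c) by (field; lra).
    pose proof (Rle_abs c); unfold R; nra. }
  specialize (HMf (- R) R ltac:(unfold R; lra) ltac:(unfold R; lra)).
  specialize (HMg (- R) R ltac:(unfold R; lra) ltac:(unfold R; lra)).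
  specialize (Hfg R ltac:(unfold R; lra)).
  apply Rabs_lt_between' in HMf; apply Rabs_lt_between' in HMg; lra.
Qed.

Lemma is_RInt_inv_square K a b : a <= b -> 0 < a \/ b < 0 ->
  is_RInt (fun t => K / t ^ 2) a b (K / a - K / b).
Proof.
  intros Hab H0.
  assert (Hne : forall t, Rmin a b <= t <= Rmax a b -> t <> 0).
  { rewrite Rmin_left, Rmax_right by lra; intros; lra. }
  replace (K / a - K / b) with (minus (- K / b) (- K / a))
    by (unfold minus, plus, opp; simpl; field; split; lra).
  apply (is_RInt_derive (fun t => - K / t)).
  - intros t Ht; specialize (Hne t Ht); auto_derive; [auto | field; auto].
  - intros t Ht; specialize (Hne t Ht).
    apply (ex_derive_continuous (fun t => K / t ^ 2)); auto_derive; auto.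
Qed.

Lemma abs_RInt_le_dominated f g a b : a <= b -> ex_RInt f a b -> ex_RInt g a b ->
  (forall t, a < t < b -> Rabs (f t) <= g t) -> Rabs (RInt f a b) <= RInt g a b.
Proof.
  intros Hab Hf Hg Hfg.
  apply (Rle_trans _ _ _ (abs_RInt_le f a b Hab Hf)).
  apply RInt_le; auto; apply ex_RInt_norm; auto.
Qed.

Lemma RInt_Chasles3 f a b c d : (forall a b, ex_RInt f a b) ->
  RInt f a b = RInt f a c + RInt f c d + RInt f d b.
Proof.
  intros Hint.
  rewrite <- (RInt_Chasles f a c b), <- (RInt_Chasles f c d b) by auto.
  unfold plus; simpl; ring.
Qed.

Section InverseSquareTails.

Variables (f : R -> R) (K R0 : R).
Hypothesis f_int : forall a b, ex_RInt f a b.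
Hypothesis R0_pos : 0 < R0.
Hypothesis f_decay : forall v, R0 <= Rabs v -> Rabs (f v) <= K / v ^ 2.

Lemma decay_const_nonneg : 0 <= K.
Proof.
  pose proof (f_decay R0 ltac:(rewrite Rabs_right; lra)) as HR0.
  pose proof (Rabs_pos (f R0)).
  apply Rnot_lt_le; intros HK.
  assert (K / R0 ^ 2 < 0) by (apply Rdiv_neg_pos; [lra | apply pow_lt; lra]).
  lra.
Qed.

Lemma abs_RInt_tail_ordered M x y : R0 <= M -> M <= x -> x <= y ->
  Rabs (RInt f x y) <= K / M /\ Rabs (RInt f (- y) (- x)) <= K / M.
Proof.
  intros HM Hx Hy.
  pose proof decay_const_nonneg as HK.
  assert (HxyM : K / x - K / y <= K / M).
  { assert (K / x <= K / M) by (apply Rmult_le_compat_l; [lra | apply Rinv_le_contravar; lra]).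
    assert (0 <= K / y) by (apply Rdiv_le_0_compat; lra).
    lra. }
  split; eapply Rle_trans; try exact HxyM.
  - rewrite <- (is_RInt_unique _ _ _ _ (is_RInt_inv_square K x y ltac:(lra) ltac:(lra))).
    apply abs_RInt_le_dominated; auto; [eexists; apply is_RInt_inv_square; lra|].
    intros t Ht; apply f_decay; rewrite Rabs_right; lra.
  - replace (K / x - K / y) with (K / - y - K / - x) by (field; lra).
    rewrite <- (is_RInt_unique _ _ _ _ (is_RInt_inv_square K (- y) (- x) ltac:(lra) ltac:(lra))).
    apply abs_RInt_le_dominated; auto; [lra | eexists; apply is_RInt_inv_square; lra|].
    intros t Ht; apply f_decay; rewrite Rabs_left; lra.
Qed.

Lemma abs_RInt_tail M x y : R0 <= M -> M <= x -> M <= y ->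
  Rabs (RInt f x y) <= K / M /\ Rabs (RInt f (- x) (- y)) <= K / M.
Proof.
  intros HM Hx Hy.
  destruct (Rle_or_lt x y) as [Hxy | Hyx].
  - destruct (abs_RInt_tail_ordered M x y) as [Hpos Hneg]; auto.
    rewrite <- opp_RInt_swap, Rabs_Ropp in Hneg; auto.
  - destruct (abs_RInt_tail_ordered M y x) as [Hpos Hneg]; try lra.
    rewrite <- opp_RInt_swap, Rabs_Ropp in Hpos; auto.
Qed.

Lemma RInt_tails_vanish eps : 0 < eps -> exists M, forall x y, M <= x -> M <= y ->
  Rabs (RInt f x y) <= eps /\ Rabs (RInt f (- x) (- y)) <= eps.
Proof.
  intros Heps.
  pose proof decay_const_nonneg as HK.
  assert (HKeps : 0 <= K / eps) by (apply Rdiv_le_0_compat; lra).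
  exists (R0 + K / eps); intros x y Hx Hy.
  assert (K / (R0 + K / eps) <= eps).
  { apply Rle_div_l; [lra|].
    assert (K / eps * eps = K) by (field; lra).
    nra. }
  destruct (abs_RInt_tail (R0 + K / eps) x y) as [Hpos Hneg]; lra.
Qed.

Lemma is_improper_RInt_exists : exists l, is_improper_RInt f l.
Proof.
  set (u := fun n : nat => RInt f (- INR n) (INR n)).
  assert (Hu : Cauchy_crit u).
  { intros eps Heps. destruct (RInt_tails_vanish (eps / 3)) as [M HM]; [lra|].
    destruct (INR_unbounded M) as [N HN]; exists N; intros n m Hn Hm.
    apply le_INR in Hn; apply le_INR in Hm.
    unfold Rdist, u; rewrite (RInt_Chasles3 f (- INR n) (INR n) (- INR m) (INR m) f_int).
    destruct (HM (INR n) (INR m)) as [_ Hneg]; try lra.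
    destruct (HM (INR m) (INR n)) as [Hpos _]; try lra.
    apply Rabs_le_between in Hneg; apply Rabs_le_between in Hpos.
    apply Rabs_lt_between; lra. }
  destruct (Rcomplete.R_complete u Hu) as [l Hl]; exists l; split; auto.
  intros eps Heps. destruct (RInt_tails_vanish (eps / 3)) as [M HM]; [lra|].
  exists (Rabs M + 1); intros a b Ha Hb.
  pose proof (Rle_abs M).
  destruct (Hl (eps / 3) ltac:(lra)) as [N1 HN1].
  destruct (INR_unbounded (Rabs M + 1)) as [N2 HN2].
  set (n := Nat.max N1 N2).
  assert (Hn1 : (n >= N1)%nat) by lia. assert (Hn2 : (n >= N2)%nat) by lia.
  apply le_INR in Hn2. specialize (HN1 n Hn1). unfold Rdist, u in HN1.
  rewrite (RInt_Chasles3 f a b (- INR n) (INR n) f_int).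
  destruct (HM (- a) (INR n)) as [_ Hleft]; try lra.
  destruct (HM (INR n) b) as [Hright _]; try lra.
  rewrite Ropp_involutive in Hleft.
  apply Rabs_le_between in Hleft; apply Rabs_le_between in Hright;
    apply Rabs_lt_between' in HN1.
  apply Rabs_lt_between'; lra.
Qed.

Lemma RInt_sym_approx q R : is_improper_RInt f q -> R0 <= R ->
  Rabs (RInt f (- R) R - q) <= 2 * K / R.
Proof.
  intros [_ Hq] HR.
  apply Rle_plus_epsilon; intros eps Heps.
  destruct (Hq eps Heps) as [M HM].
  pose proof (Rabs_pos M); pose proof (Rle_abs M); pose proof (Rle_abs (- M)).
  rewrite Rabs_Ropp in *.
  set (b := R + Rabs M).
  specialize (HM (- b) b ltac:(unfold b; lra) ltac:(unfold b; lra)).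
  destruct (abs_RInt_tail_ordered R R b) as [Hright Hleft]; try (unfold b; lra).
  rewrite (RInt_Chasles3 f (- b) b (- R) R f_int) in HM.
  replace (2 * K / R) with (K / R + K / R) by (field; lra).
  apply Rabs_le_between in Hleft; apply Rabs_le_between in Hright;
    apply Rabs_lt_between' in HM.
  apply Rabs_le_between'; lra.
Qed.

End InverseSquareTails.

Lemma continuous_energy g p v : continuity g -> continuous (fun v => g (v ^ 2 / 2 + p)) v.
Proof.
  intros Hg; apply continuity_pt_filterlim.
  apply (continuity_pt_comp (fun v => v ^ 2 / 2 + p) g); [|apply Hg].
  apply derivable_continuous_pt, (ex_derive_Reals_0 (fun v => v ^ 2 / 2 + p)).
  auto_derive; auto.
Qed.

Lemma ex_RInt_energy g p a b : continuity g -> ex_RInt (fun v => g (v ^ 2 / 2 + p)) a b.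
Proof.
  intros Hg; apply (ex_RInt_continuous (V := R_CompleteNormedModule)).
  intros; apply continuous_energy; auto.
Qed.

Section EnergyIntegral.

Variables mu mu' : R -> R.
Hypothesis mu_der : forall y, derivable_pt_lim mu y (mu' y).
Hypothesis mu'_cont : continuity mu'.

Lemma is_derive_mu_shift c u : is_derive (fun z => mu (c + z)) u (mu' (c + u)).
Proof.
  replace (mu' (c + u)) with (scal 1 (mu' (c + u)))
    by (unfold scal; simpl; unfold mult; simpl; ring).
  apply (is_derive_comp mu (fun z => c + z)); [apply is_derive_Reals, mu_der|].
  auto_derive; auto.
Qed.

Lemma is_derive_RInt_energy R p :
  is_derive (fun p => RInt (fun v => mu (v ^ 2 / 2 + p)) (- R) R) p
            (RInt (fun v => mu' (v ^ 2 / 2 + p)) (- R) R).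
Proof.
  assert (mu_cont : continuity mu).
  { intros y; apply derivable_continuous_pt; exists (mu' y); apply mu_der. }
  assert (Hder : forall v u, Derive (fun z => mu (v ^ 2 / 2 + z)) u = mu' (v ^ 2 / 2 + u)).
  { intros; apply is_derive_unique, is_derive_mu_shift. }
  rewrite (RInt_ext _ (fun v => Derive (fun u => mu (v ^ 2 / 2 + u)) p))
    by (intros; rewrite Hder; auto).
  apply (is_derive_RInt_param (fun u v => mu (v ^ 2 / 2 + u))).
  - exists (mkposreal 1 Rlt_0_1); intros y _ t _.
    exists (mu' (t ^ 2 / 2 + y)); apply is_derive_mu_shift.
  - intros t _.
    apply continuity_2d_pt_ext with (f := fun u v => mu' (v ^ 2 / 2 + u));
      [intros; rewrite Hder; auto|].
    apply continuity_1d_2d_pt_comp with (g := fun u v => v ^ 2 / 2 + u); [apply mu'_cont|].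
    apply continuity_2d_pt_plus; [| apply continuity_2d_pt_id1].
    apply continuity_2d_pt_ext with (f := fun u v => v * v * / 2); [intros; simpl; field|].
    apply continuity_2d_pt_mult; [| apply continuity_2d_pt_const].
    apply continuity_2d_pt_mult; apply continuity_2d_pt_id2.
  - exists (mkposreal 1 Rlt_0_1); intros y _.
    apply ex_RInt_energy; auto.
Qed.

Variables (K R0 m : R).
Hypothesis R0_pos : 0 < R0.
Hypothesis mu'_decay :
  forall p v, m <= p -> R0 <= Rabs v -> Rabs (mu' (v ^ 2 / 2 + p)) <= K / v ^ 2.

(* Mean value theorem in p for the truncated integral, combined with the uniform
   tail estimate [RInt_sym_approx] at the intermediate point. *)
Lemma RInt_energy_increment_le p1 p2 R : m <= p1 -> p1 < p2 -> R0 <= R ->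
  (forall p q, p1 < p < p2 -> is_improper_RInt (fun v => mu' (v ^ 2 / 2 + p)) q -> q <= 0) ->
  RInt (fun v => mu (v ^ 2 / 2 + p2)) (- R) R
    <= RInt (fun v => mu (v ^ 2 / 2 + p1)) (- R) R + 2 * K * (p2 - p1) / R.
Proof.
  intros Hm Hp HR Hq.
  destruct (MVT_cor2 (fun p => RInt (fun v => mu (v ^ 2 / 2 + p)) (- R) R)
              (fun p => RInt (fun v => mu' (v ^ 2 / 2 + p)) (- R) R) p1 p2 Hp)
    as [p [Hmvt Hpp]].
  { intros c _; apply is_derive_Reals, is_derive_RInt_energy. }
  assert (Hint : forall a b, ex_RInt (fun v => mu' (v ^ 2 / 2 + p)) a b)
    by (intros; apply ex_RInt_energy; auto).
  assert (Hdecay : forall v, R0 <= Rabs v -> Rabs (mu' (v ^ 2 / 2 + p)) <= K / v ^ 2)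
    by (intros; apply mu'_decay; lra).
  destruct (is_improper_RInt_exists _ K R0 Hint R0_pos Hdecay) as [q Hqp].
  pose proof (Hq p q Hpp Hqp) as Hq0.
  pose proof (RInt_sym_approx _ K R0 Hint R0_pos Hdecay q R Hqp HR) as Happrox.
  apply Rabs_le_between' in Happrox.
  assert (RInt (fun v => mu' (v ^ 2 / 2 + p)) (- R) R * (p2 - p1) <= 2 * K / R * (p2 - p1))
    by (apply Rmult_le_compat_r; lra).
  replace (2 * K * (p2 - p1) / R) with (2 * K / R * (p2 - p1)) by (field; lra).
  lra.
Qed.

Lemma improper_RInt_energy_antitone p1 p2 I1 I2 : m <= p1 -> p1 < p2 ->
  (forall p q, p1 < p < p2 -> is_improper_RInt (fun v => mu' (v ^ 2 / 2 + p)) q -> q <= 0) ->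
  is_improper_RInt (fun v => mu (v ^ 2 / 2 + p1)) I1 ->
  is_improper_RInt (fun v => mu (v ^ 2 / 2 + p2)) I2 -> I2 <= I1.
Proof.
  intros Hm Hp Hq HI1 HI2.
  apply (is_improper_RInt_le_sym _ _ _ _ (2 * K * (p2 - p1)) R0 HI2 HI1).
  intros R HR; apply RInt_energy_increment_le; auto.
Qed.

End EnergyIntegral.

Lemma abs_rpow_ge_self y gamma : 1 <= y -> 1 <= gamma -> y <= abs_rpow y gamma.
Proof.
  intros Hy Hg; unfold abs_rpow.
  destruct (Req_EM_T y 0); [lra|].
  rewrite Rabs_right by lra.
  rewrite <- (Rpower_1 y) at 1 by lra; apply Rle_Rpower; lra.
Qed.

Lemma energy_decay (g : R -> R) gamma C m :
  1 < gamma -> 0 < C -> (forall y, Rabs (g y) <= C / (1 + abs_rpow y gamma)) ->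
  forall p v, m <= p -> 2 + 2 * Rabs m <= Rabs v ->
  Rabs (g (v ^ 2 / 2 + p)) <= 4 * C / v ^ 2.
Proof.
  intros Hgamma HC Hg p v Hp Hv.
  pose proof (Rabs_pos m); pose proof (Rle_abs (- m)); rewrite Rabs_Ropp in *.
  assert (Hv2 : 4 + 8 * Rabs m <= v ^ 2) by (rewrite <- pow2_abs; nra).
  assert (Hy : v ^ 2 / 4 <= v ^ 2 / 2 + p) by lra.
  pose proof (abs_rpow_ge_self (v ^ 2 / 2 + p) gamma ltac:(lra) ltac:(lra)).
  eapply Rle_trans; [apply Hg|].
  replace (4 * C / v ^ 2) with (C / (v ^ 2 / 4)) by (field; intros ->; simpl in Hv2; lra).
  apply Rmult_le_compat_l; [lra|]; apply Rinv_le_contravar; lra.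
Qed.

Lemma second_derivative_increases f f' f'' a b : a < b ->
  (forall x, a <= x <= b -> derivable_pt_lim f x (f' x)) ->
  (forall x, a <= x <= b -> derivable_pt_lim f' x (f'' x)) ->
  f' a = 0 -> f' b = 0 -> f b < f a ->
  exists s t, a < s < t /\ t < b /\ f'' s < f'' t.
Proof.
  intros Hab Hf Hf' Ha Hb Hdecr.
  destruct (MVT_cor2 f f' a b Hab Hf) as [c [Hc Hcab]].
  assert (Hc' : f' c < 0) by nra.
  destruct (MVT_cor2 f' f'' a c) as [s [Hs Hsac]]; [lra | intros; apply Hf'; lra|].
  destruct (MVT_cor2 f' f'' c b) as [t [Ht Htcb]]; [lra | intros; apply Hf'; lra|].
  exists s, t; repeat split; try lra.
  assert (f'' s < 0) by nra; assert (0 < f'' t) by nra; lra.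
Qed.

Lemma second_derivative_antitone mu mu' phi phi'' K R0 a b :
  (forall y, derivable_pt_lim mu y (mu' y)) -> continuity mu' -> 0 < R0 ->
  (forall p v, phi b <= p -> R0 <= Rabs v -> Rabs (mu' (v ^ 2 / 2 + p)) <= K / v ^ 2) ->
  continuity phi ->
  (forall x y, a <= x -> x < y -> y <= b -> phi y < phi x) ->
  (forall x, exists I, is_improper_RInt (fun v => mu (v ^ 2 / 2 + phi x)) I /\ phi'' x = 1 - I) ->
  (forall x q, a <= x <= b -> is_improper_RInt (fun v => mu' (v ^ 2 / 2 + phi x)) q -> q <= 0) ->
  forall s t, a <= s -> s < t -> t <= b -> phi'' t <= phi'' s.
Proof.
  intros Hmu_der Hmu'_cont HR0 Hdecay Hphi_cont Hdecr Hode Hq s t Hs Hst Ht.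
  destruct (Hode s) as [Is [HIs ->]]; destruct (Hode t) as [It [HIt ->]].
  assert (Hts : phi t < phi s) by (apply Hdecr; auto).
  cut (Is <= It); [lra|].
  apply (improper_RInt_energy_antitone mu mu' Hmu_der Hmu'_cont K R0 (phi b) HR0 Hdecay
           (phi t) (phi s)); auto.
  - destruct (Req_dec t b) as [-> | Htb]; [lra|].
    left; apply Hdecr; lra.
  - intros p q Hp Hqp.
    destruct (IVT_gen phi s t p Hphi_cont) as [x [Hx Hxp]].
    { rewrite Rmin_right, Rmax_left by lra; lra. }
    rewrite Rmin_left, Rmax_right in Hx by lra.
    apply (Hq x); [lra | rewrite Hxp; auto].
Qed.

Theorem theorem3
  (mu mu' : R -> R) (phi phi' phi'' : R -> R) (P gamma C : R)
  (* mu in C^1 with derivative mu' *)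
  (Hmu_der : forall y, derivable_pt_lim mu y (mu' y))
  (Hmu'_cont : continuity mu')
  (* (i) mu nonnegative *)
  (Hmu_nonneg : forall y, 0 <= mu y)
  (* (ii) normalization *)
  (Hmu_norm : improper_integral (fun v => mu (v ^ 2 / 2)) 1)
  (* (iii) decay of mu' *)
  (Hgamma : 1 < gamma) (HC : 0 < C)
  (Hmu'_decay : forall y, Rabs (mu' y) <= C / (1 + abs_rpow y gamma))
  (* phi in C^2 *)
  (Hphi_der : forall x, derivable_pt_lim phi x (phi' x))
  (Hphi'_der : forall x, derivable_pt_lim phi' x (phi'' x))
  (Hphi''_cont : continuity phi'')
  (* (iv) phi periodic with minimal period P *)
  (HP : 0 < P)
  (Hper : forall x, phi (x + P) = phi x)
  (Hminper : forall T, 0 < T < P -> exists x, phi (x + T) <> phi x)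
  (* normalization: phi(0) = phi(P) = phi_+ = max, phi(P/2) = phi_- = min *)
  (Hmax : forall x, phi x <= phi 0)
  (Hmin : forall x, phi (P / 2) <= phi x)
  (HP0 : phi P = phi 0)
  (Hsym : forall x, 0 <= x <= P -> phi x = phi (P - x))
  (Hdecr : forall x y, 0 <= x -> x < y -> y <= P / 2 -> phi y < phi x)
  (* the ODE phi'' = 1 - int mu(v^2/2 + phi) dv *)
  (Hode : forall x, exists I, improper_integral (fun v => mu (v ^ 2 / 2 + phi x)) I
                             /\ phi'' x = 1 - I) :
  (exists x, 0 <= x <= P / 2 /\
     exists q, improper_integral (fun v => mu' (v ^ 2 / 2 + phi x)) q /\ 0 < q)
  /\ ~ (forall e, phi (P / 2) <= e -> mu' e <= 0).
Proof.
  assert (Hpos : exists x, 0 <= x <= P / 2 /\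
     exists q, improper_integral (fun v => mu' (v ^ 2 / 2 + phi x)) q /\ 0 < q).
  { apply NNPP; intros Hno.
    assert (Hcrit0 : phi' 0 = 0).
    { apply (deriv_maximum phi (-1) 1 0 (exist _ (phi' 0) (Hphi_der 0))); try lra.
      intros; apply Hmax. }
    assert (HcritP : phi' (P / 2) = 0).
    { apply (deriv_minimum phi (P / 2 - 1) (P / 2 + 1) (P / 2)
               (exist _ (phi' (P / 2)) (Hphi_der (P / 2)))); try lra.
      intros; apply Hmin. }
    destruct (second_derivative_increases phi phi' phi'' 0 (P / 2)) as (s & t & Hst & Ht & Hlt);
      auto; [lra | apply Hdecr; lra|].
    enough (phi'' t <= phi'' s) by lra.
    pose proof (Rabs_pos (phi (P / 2))).
    apply (second_derivative_antitone mu mu' phi phi'' (4 * C) (2 + 2 * Rabs (phi (P / 2)))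
             0 (P / 2)); auto; try lra.
    - apply (energy_decay mu' gamma); auto.
    - intros y; apply derivable_continuous_pt; exists (phi' y); apply Hphi_der.
    - intros x; destruct (Hode x) as [I [HI Hx]]; exists I.
      split; [apply improper_integralE|]; auto.
    - intros x q Hx Hq; apply Rnot_lt_le; intros Hq0.
      apply Hno; exists x; split; [auto | exists q; split; auto].
      apply improper_integralE; auto. }
  split; [exact Hpos|].
  intros Hneg; destruct Hpos as [x [_ [q [Hq Hq0]]]].
  apply improper_integralE, is_improper_RInt_nonpos in Hq; [lra|].
  intros v; apply Hneg.
  pose proof (Hmin x); pose proof (pow2_ge_0 v); lra.
Qed.
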